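(* Let $T>0$, $\mu>0$, and consider a partition of $[0,T]$ with mesh-size $h$ satisfying $$h\le\frac{\pi^2}{\sqrt2\,(2+\sqrt\mu\,T)\,\mu\,T}.$$ Then for all $u_h\in V^h_{0,*}$, $$\frac{2\pi^2}{(2+\sqrt\mu T)^2(\pi^2+4\mu T^2)}\,|u_h|_{H^1(0,T)}\le\sup_{0\ne v_h\in V^h_{0,*}}\frac{a(u_h,\overline{\mathcal H}_Tv_h)}{|v_h|_{H^1(0,T)}}.$$
   Context: $H^1_{0,*}(0,T)=\{u\in H^1(0,T):u(0)=0\}$, $H^1_{*,0}(0,T)=\{v\in H^1(0,T):v(T)=0\}$, with the norm $|u|_{H^1(0,T)}=\|\partial_tu\|_{L^2(0,T)}$. The bilinear form is $a(u,v):=-\langle\partial_tu,\partial_tv\rangle_{L^2(0,T)}+\mu\langle u,v\rangle_{L^2(0,T)}$ for $u\in H^1_{0,*}$, $v\in H^1_{*,0}$, and $(\overline{\mathcal H}_Tv)(t):=v(T)-v(t)$. For a partition $0=\eta_0<\dots<\eta_{l+1}=T$ with $h=\max_i(\eta_{i+1}-\eta_i)$, $S^2_h$ is the space of $C^1([0,T])$ functions that are polynomials of degree $\le2$ on each $[\eta_i,\eta_{i+1}]$, and $V^h_{0,*}:=\{v_h\in S^2_h:v_h(0)=0\}$. *)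

From Stdlib Require Import Reals Lra List.
From Coquelicot Require Import Coquelicot.
Open Scope R_scope.

Definition is_partition (T : R) (l : nat) (eta : nat -> R) : Prop :=
  eta 0%nat = 0 /\ eta (S l) = T /\ (forall i, (i <= l)%nat -> eta i < eta (S i)).

Definition mesh (l : nat) (eta : nat -> R) : R :=
  fold_right Rmax 0 (map (fun i => eta (S i) - eta i) (seq 0 (S l))).

Definition C1_on (a b : R) (v : R -> R) : Prop :=
  exists dv : R -> R,
    (forall t, a <= t <= b -> forall eps, 0 < eps -> exists delta, 0 < delta /\
       forall s, a <= s <= b -> Rabs (s - t) < delta ->
         Rabs (v s - v t - dv t * (s - t)) <= eps * Rabs (s - t)) /\
    (forall t, a <= t <= b -> forall eps, 0 < eps -> exists delta, 0 < delta /\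
       forall s, a <= s <= b -> Rabs (s - t) < delta -> Rabs (dv s - dv t) < eps).

Definition S2h (T : R) (l : nat) (eta : nat -> R) (v : R -> R) : Prop :=
  C1_on 0 T v /\
  (forall i, (i <= l)%nat -> exists a b c : R,
     forall t, eta i <= t <= eta (S i) -> v t = a + b * t + c * t ^ 2).

Definition Vh0 (T : R) (l : nat) (eta : nat -> R) (v : R -> R) : Prop :=
  S2h T l eta v /\ v 0 = 0.

Definition L2inner (T : R) (f g : R -> R) : R := RInt (fun t => f t * g t) 0 T.

Definition H1semi (T : R) (u : R -> R) : R :=
  sqrt (L2inner T (Derive u) (Derive u)).

Definition bform (T mu : R) (u v : R -> R) : R :=
  - L2inner T (Derive u) (Derive v) + mu * L2inner T u v.

Definition HbarT (T : R) (v : R -> R) : R -> R := fun t => v T - v t.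

Definition infsup_quotients (T mu : R) (l : nat) (eta : nat -> R) (u : R -> R) : R -> Prop :=
  fun q => exists v : R -> R, Vh0 T l eta v /\ (exists t, 0 <= t <= T /\ v t <> 0) /\
     q = bform T mu u (HbarT T v) / H1semi T v.

(* Idea.  Given u in V^h_{0,*}, put p := u' (a continuous piecewise linear
   function), U := an antiderivative of u with U(0) = 0, and

       z := p + mu U,       w := p + mu I_h U,       v(t) := int_0^t w,

   where I_h is piecewise linear interpolation at the nodes.  Then v lies in
   V^h_{0,*}, v' = w, and integration by parts gives a(u, Hbar_T v) = <w, z>.
   Three estimates finish the proof:
   - stability:      ||p||^2 <= (1 + sqrt mu T)^2 ||z||^2;
   - interpolation:  ||z - w||^2 = mu^2 ||U - I_h U||^2 <= mu^2 h^4/90 ||p||^2,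
                     since U'' = p (elementwise Peano-kernel estimate);
   - numerics:       under the mesh condition, c^2 <= 1/(1+sqrt mu T)^2
                     - (mu h^2)^2/90, where c is the inf-sup constant.
   Hence c^2 ||p||^2 <= ||z||^2 - ||z - w||^2 = 2<w,z> - ||w||^2, and the
   inequality 2ab - b^2 <= a^2 turns this into c ||p|| <= <w,z> / ||w||.
   If ||p|| = 0 the claim reduces to the supremum being nonnegative, which is
   witnessed by the test functions t |-> +t and t |-> -t. *)

From Stdlib Require Import Reals Lra Lia List Psatz Classical.
From Coquelicot Require Import Coquelicot.
Open Scope R_scope.

(* Coquelicot's continuity and derivative rules, specialised to R -> R so
   that [apply] unifies with goals about real functions. *)
Lemma cont_plus (f g : R -> R) x :
  continuous f x -> continuous g x -> continuous (fun t => f t + g t) x.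
Proof. apply (continuous_plus f g). Qed.
Lemma cont_minus (f g : R -> R) x :
  continuous f x -> continuous g x -> continuous (fun t => f t - g t) x.
Proof. apply (continuous_minus f g). Qed.
Lemma cont_mult (f g : R -> R) x :
  continuous f x -> continuous g x -> continuous (fun t => f t * g t) x.
Proof. apply (continuous_mult f g). Qed.
Lemma cont_opp (f : R -> R) x : continuous f x -> continuous (fun t => - f t) x.
Proof. apply (continuous_opp f). Qed.
Lemma cont_const (c x : R) : continuous (fun _ => c) x.
Proof. apply continuous_const. Qed.
Lemma cont_id (x : R) : continuous (fun t => t) x.
Proof. apply continuous_id. Qed.

Lemma derive_plus (f g : R -> R) x df dg :
  is_derive f x df -> is_derive g x dg -> is_derive (fun t => f t + g t) x (df + dg).
Proof. apply (is_derive_plus f g). Qed.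
Lemma derive_minus (f g : R -> R) x df dg :
  is_derive f x df -> is_derive g x dg -> is_derive (fun t => f t - g t) x (df - dg).
Proof. apply (is_derive_minus f g). Qed.
Lemma derive_mult (f g : R -> R) x df dg :
  is_derive f x df -> is_derive g x dg ->
  is_derive (fun t => f t * g t) x (df * g x + f x * dg).
Proof. intros Hf Hg. apply (is_derive_mult f g); auto. intros; apply Rmult_comm. Qed.
Lemma derive_opp (f : R -> R) x df :
  is_derive f x df -> is_derive (fun t => - f t) x (- df).
Proof. apply (is_derive_opp f). Qed.
Lemma derive_const (c x : R) : is_derive (fun _ => c) x 0.
Proof. apply (is_derive_const c x). Qed.
Lemma derive_id (x : R) : is_derive (fun t => t) x 1.
Proof. apply (is_derive_id x). Qed.

Lemma derive_eq (f : R -> R) (x l l' : R) : is_derive f x l -> l = l' -> is_derive f x l'.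
Proof. intros; subst; auto. Qed.

(* Eta-reduced forms [Rminus c], [Rplus c], [Rmult c] arise from
   [fun t => c - t] etc. and need their own rules. *)
Lemma derive_minus_c (c x : R) : is_derive (Rminus c) x (0 - 1).
Proof. apply (derive_minus (fun _ => c) (fun t => t)); [apply derive_const|apply derive_id]. Qed.
Lemma derive_plus_c (c x : R) : is_derive (Rplus c) x (0 + 1).
Proof. apply (derive_plus (fun _ => c) (fun t => t)); [apply derive_const|apply derive_id]. Qed.
Lemma derive_mult_c (c x : R) : is_derive (Rmult c) x (0 * x + c * 1).
Proof. apply (derive_mult (fun _ => c) (fun t => t)); [apply derive_const|apply derive_id]. Qed.
Lemma cont_minus_c (c x : R) : continuous (Rminus c) x.
Proof. apply (cont_minus (fun _ => c) (fun t => t)); [apply cont_const|apply cont_id]. Qed.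
Lemma cont_plus_c (c x : R) : continuous (Rplus c) x.
Proof. apply (cont_plus (fun _ => c) (fun t => t)); [apply cont_const|apply cont_id]. Qed.
Lemma cont_mult_c (c x : R) : continuous (Rmult c) x.
Proof. apply (cont_mult (fun _ => c) (fun t => t)); [apply cont_const|apply cont_id]. Qed.

Ltac cont1 := match goal with
 | |- continuous (Rminus ?c) _ => apply cont_minus_c
 | |- continuous (Rplus ?c) _ => apply cont_plus_c
 | |- continuous (Rmult ?c) _ => apply cont_mult_c
 | |- continuous (fun t => _ + _) _ => apply cont_plus
 | |- continuous (fun t => _ - _) _ => apply cont_minus
 | |- continuous (fun t => _ * _) _ => apply cont_mult
 | |- continuous (fun t => - _) _ => apply cont_opp
 | |- continuous (fun t => t) _ => apply cont_id
 | |- continuous (fun t => ?c) _ => apply cont_const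
 | |- _ => solve [eauto]
 end.
Ltac cont := repeat cont1.

Ltac der1 := match goal with
 | |- is_derive (Rminus ?c) _ _ => apply derive_minus_c
 | |- is_derive (Rplus ?c) _ _ => apply derive_plus_c
 | |- is_derive (Rmult ?c) _ _ => apply derive_mult_c
 | |- is_derive (fun t => _ + _) _ _ => apply derive_plus
 | |- is_derive (fun t => _ - _) _ _ => apply derive_minus
 | |- is_derive (fun t => _ * _) _ _ => apply derive_mult
 | |- is_derive (fun t => - _) _ _ => apply derive_opp
 | |- is_derive (fun t => t) _ _ => apply derive_id
 | |- is_derive (fun t => ?c) _ _ => apply derive_const
 | |- _ => solve [eauto]
 end.
Ltac der := repeat der1.

(* Turns an equation at an arbitrary type displayed as R into one in R, so
   that [ring]/[field] apply. *)
Ltac Req := match goal with |- @eq _ ?x ?y => change (@eq R x y) end.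

Lemma lipschitz_continuous (f : R -> R) t K :
  (forall s, Rabs (f s - f t) <= K * Rabs (s - t)) -> continuous f t.
Proof.
  intros H. apply continuity_pt_filterlim.
  intros eps Heps. exists (eps / (Rabs K + 1)). split.
  - apply Rdiv_lt_0_compat; auto. pose proof (Rabs_pos K); lra.
  - intros x [_ Hx]. simpl in *. unfold R_dist in *.
    pose proof (H x). pose proof (Rabs_pos K). pose proof (Rabs_pos (x - t)).
    assert (K * Rabs (x - t) <= Rabs K * Rabs (x - t)).
    { apply Rmult_le_compat_r; auto. apply Rle_abs. }
    assert (Rabs K * Rabs (x - t) < eps).
    { apply Rle_lt_trans with ((Rabs K + 1) * Rabs (x - t)). nra.
      replace eps with ((Rabs K + 1) * (eps / (Rabs K + 1))) by (field; lra).
      apply Rmult_lt_compat_l; lra. }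
    lra.
Qed.

(* Projection onto [a, b]: the building block of hat-function sums. *)
Definition clamp (a b t : R) : R := Rmax a (Rmin t b).

Lemma clamp_cont a b t : continuous (clamp a b) t.
Proof.
  apply lipschitz_continuous with 1. intros s.
  unfold clamp, Rmin, Rmax, Rabs.
  repeat destruct (Rle_dec _ _); repeat destruct (Rcase_abs _); lra.
Qed.
Lemma clamp_low a b t : a <= b -> t <= a -> clamp a b t = a.
Proof. intros. unfold clamp, Rmin, Rmax. repeat destruct (Rle_dec _ _); lra. Qed.
Lemma clamp_high a b t : a <= b -> b <= t -> clamp a b t = b.
Proof. intros. unfold clamp, Rmin, Rmax. repeat destruct (Rle_dec _ _); lra. Qed.
Lemma clamp_mid a b t : a <= t <= b -> clamp a b t = t.
Proof. intros. unfold clamp, Rmin, Rmax. repeat destruct (Rle_dec _ _); lra. Qed.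

Section Interpolation.
Variable l : nat.
Variable eta : nat -> R.
Hypothesis Hstep : forall i, (i <= l)%nat -> eta i < eta (S i).

Lemma eta_mono : forall i j, (i <= j)%nat -> (j <= S l)%nat -> eta i <= eta j.
Proof.
  intros i j Hij. induction Hij as [|j Hij IH]; intros Hj.
  - lra.
  - assert (eta j < eta (S j)) by (apply Hstep; lia). specialize (IH ltac:(lia)). lra.
Qed.

Lemma locate_element : forall n, (n <= l)%nat -> forall t, eta 0%nat <= t <= eta (S n) ->
  exists j, (j <= n)%nat /\ eta j <= t <= eta (S j).
Proof.
  induction n; intros Hn t Ht.
  - exists 0%nat; split; [lia|lra].
  - destruct (Rle_dec t (eta (S n))) as [H|H].
    + destruct (IHn ltac:(lia) t ltac:(lra)) as [j [Hj Hj']]. exists j; split; [lia|auto].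
    + exists (S n); split; [lia|lra].
Qed.

(* Sum of the first n slope-weighted ramps; the ramp of element k rises
   from 0 at eta k to eta (k+1) - eta k at eta (k+1) and is constant outside. *)
Fixpoint interp_sum (g : R -> R) (n : nat) (t : R) : R :=
  match n with
  | O => 0
  | S k => interp_sum g k t + (g (eta (S k)) - g (eta k)) / (eta (S k) - eta k)
                              * (clamp (eta k) (eta (S k)) t - eta k)
  end.

(* The continuous piecewise linear interpolant of g at the nodes. *)
Definition interp (g : R -> R) (t : R) : R := g (eta 0%nat) + interp_sum g (S l) t.

Lemma interp_cont g t : continuous (interp g) t.
Proof.
  unfold interp. apply (cont_plus (fun _ => g (eta 0%nat))); [apply cont_const|].
  induction (S l); simpl.
  - apply cont_const.
  - apply (cont_plus (interp_sum g n)); auto. cont. apply clamp_cont.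
Qed.

Lemma interp_sum_after g : forall n, (n <= S l)%nat -> forall t, eta n <= t ->
  interp_sum g n t = g (eta n) - g (eta 0%nat).
Proof.
  induction n; intros Hn t Ht; simpl.
  - ring.
  - assert (eta n < eta (S n)) by (apply Hstep; lia).
    rewrite IHn by (try lia; lra). rewrite clamp_high by lra. field. lra.
Qed.

Lemma interp_sum_stable g j t : (j <= l)%nat -> t <= eta (S j) ->
  forall n, (S j <= n)%nat -> (n <= S l)%nat -> interp_sum g n t = interp_sum g (S j) t.
Proof.
  intros Hj Ht n Hn. induction Hn as [|n Hn IH]; intros Hn'.
  - reflexivity.
  - rewrite <- IH by lia. simpl (interp_sum g (S n) t).
    assert (eta n < eta (S n)) by (apply Hstep; lia).
    assert (eta (S j) <= eta n) by (apply eta_mono; lia).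
    rewrite clamp_low by lra. ring.
Qed.

Lemma interp_elem g j t : (j <= l)%nat -> eta j <= t <= eta (S j) ->
  interp g t = g (eta j) + (g (eta (S j)) - g (eta j)) / (eta (S j) - eta j) * (t - eta j).
Proof.
  intros Hj Ht. unfold interp.
  rewrite (interp_sum_stable g j t Hj ltac:(lra) (S l)) by lia.
  simpl. rewrite interp_sum_after by (try lia; lra). rewrite clamp_mid by lra. ring.
Qed.

End Interpolation.

Definition within_deriv (a b : R) (v dv : R -> R) (t : R) : Prop :=
  forall eps, 0 < eps -> exists delta, 0 < delta /\
    forall s, a <= s <= b -> Rabs (s - t) < delta ->
      Rabs (v s - v t - dv t * (s - t)) <= eps * Rabs (s - t).

Lemma C1_on_of_derive a b (f df : R -> R) :
  (forall t, is_derive f t (df t)) -> (forall t, continuous df t) -> C1_on a b f.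
Proof.
  intros Hd Hc. exists df. split.
  - intros t _ eps Heps.
    destruct (proj1 (is_derive_Reals f t (df t)) (Hd t) eps Heps) as [d Hdl].
    exists d. split; [apply cond_pos|]. intros s _ Hs.
    destruct (Req_dec s t) as [->|Hne].
    + replace (f t - f t - df t * (t - t)) with 0 by ring.
      rewrite Rabs_R0, Rminus_diag, Rabs_R0. lra.
    + assert (Hh : s - t <> 0) by lra.
      specialize (Hdl (s - t) Hh Hs). replace (t + (s - t)) with s in Hdl by ring.
      replace (f s - f t - df t * (s - t)) with (((f s - f t) / (s - t) - df t) * (s - t))
        by (field; auto).
      rewrite Rabs_mult. apply Rmult_le_compat_r; [apply Rabs_pos|lra].
  - intros t _ eps Heps.
    destruct (proj2 (continuity_pt_filterlim df t) (Hc t) eps Heps) as [d [Hd0 Hdd]].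
    exists d; split; auto.
    intros s _ Hs. destruct (Req_dec s t) as [->|Hne].
    + rewrite Rminus_diag, Rabs_R0; auto.
    + apply (Hdd s). split; [split; [exact I|auto]|]. simpl. unfold R_dist. auto.
Qed.

Lemma within_deriv_interior a b v dv t :
  a < t < b -> within_deriv a b v dv t -> is_derive v t (dv t).
Proof.
  intros Ht H. apply is_derive_Reals. intros eps Heps.
  destruct (H (eps/2) ltac:(lra)) as [d [Hd Hs]].
  assert (Hpos : 0 < Rmin d (Rmin (t - a) (b - t))) by (repeat apply Rmin_glb_lt; lra).
  exists (mkposreal _ Hpos). intros h Hh Hlt. simpl in Hlt.
  pose proof (Rmin_l d (Rmin (t - a) (b - t))). pose proof (Rmin_r d (Rmin (t - a) (b - t))).
  pose proof (Rmin_l (t - a) (b - t)). pose proof (Rmin_r (t - a) (b - t)).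
  pose proof (Rle_abs h). pose proof (Rle_abs (-h)). rewrite Rabs_Ropp in *.
  specialize (Hs (t + h) ltac:(lra)). replace (t + h - t) with h in Hs by ring.
  specialize (Hs ltac:(lra)).
  replace ((v (t + h) - v t) / h - dv t) with ((v (t + h) - v t - dv t * h) / h)
    by (field; auto).
  unfold Rdiv. rewrite Rabs_mult, Rabs_inv.
  assert (0 < Rabs h) by (apply Rabs_pos_lt; auto).
  apply Rle_lt_trans with (eps / 2 * Rabs h * / Rabs h).
  - apply Rmult_le_compat_r; [left; apply Rinv_0_lt_compat|]; auto.
  - field_simplify; lra.
Qed.

Lemma nearby_point al be t r : al < be -> al <= t <= be -> 0 < r -> r <= (be - al) / 2 ->
  exists s, al <= s <= be /\ s <> t /\ Rabs (s - t) <= r.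
Proof.
  intros Hab Ht Hr Hr2. destruct (Rle_dec (t + r) be).
  - exists (t + r). split; [lra|]. split; [lra|]. replace (t + r - t) with r by ring.
    rewrite Rabs_pos_eq; lra.
  - exists (t - r). split; [lra|]. split; [lra|]. replace (t - r - t) with (- r) by ring.
    rewrite Rabs_Ropp, Rabs_pos_eq; lra.
Qed.

Lemma within_deriv_quadratic a b v dv t al be A B C :
  a <= al -> al < be -> be <= b -> al <= t <= be ->
  (forall s, al <= s <= be -> v s = A + B * s + C * s ^ 2) ->
  within_deriv a b v dv t -> dv t = B + 2 * C * t.
Proof.
  intros H1 H2 H3 Ht Hv H.
  destruct (Req_dec (dv t) (B + 2 * C * t)) as [E|E]; auto. exfalso.
  set (D := Rabs (dv t - (B + 2 * C * t))).
  assert (HD : 0 < D) by (apply Rabs_pos_lt; lra).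
  destruct (H (D/2) ltac:(lra)) as [d [Hd Hs]].
  set (r := Rmin (d/2) (Rmin ((be - al)/2) (D / (4 * (Rabs C + 1))))).
  assert (HCp : 0 < Rabs C + 1) by (pose proof (Rabs_pos C); lra).
  assert (Hr : 0 < r).
  { unfold r. repeat apply Rmin_glb_lt; try lra. apply Rdiv_lt_0_compat; lra. }
  assert (Hr1 : r <= d/2) by apply Rmin_l.
  assert (Hr2 : r <= (be - al)/2) by (eapply Rle_trans; [apply Rmin_r|apply Rmin_l]).
  assert (Hr3 : r <= D / (4 * (Rabs C + 1))) by (eapply Rle_trans; [apply Rmin_r|apply Rmin_r]).
  assert (Hrc : Rabs C * r < D / 2).
  { apply Rle_lt_trans with (Rabs C * (D / (4 * (Rabs C + 1)))).
    - apply Rmult_le_compat_l; auto. apply Rabs_pos.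
    - apply Rmult_lt_reg_r with (4 * (Rabs C + 1)); [lra|].
      field_simplify; try lra. pose proof (Rabs_pos C). nra. }
  destruct (nearby_point al be t r ltac:(lra) Ht Hr Hr2) as [s [Hs1 [Hs2 Hs3]]].
  specialize (Hs s ltac:(lra) ltac:(lra)).
  rewrite (Hv s Hs1), (Hv t Ht) in Hs.
  replace (A + B * s + C * s ^ 2 - (A + B * t + C * t ^ 2) - dv t * (s - t))
    with ((s - t) * (- (dv t - (B + 2 * C * t)) + C * (s - t))) in Hs by ring.
  rewrite Rabs_mult in Hs.
  assert (0 < Rabs (s - t)) by (apply Rabs_pos_lt; lra).
  assert (Hk : Rabs (- (dv t - (B + 2 * C * t)) + C * (s - t)) <= D / 2).
  { apply Rmult_le_reg_l with (Rabs (s - t)); auto. lra. }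
  pose proof (Rabs_triang_inv (- (dv t - (B + 2 * C * t))) (- (C * (s - t)))) as Htr.
  rewrite Rabs_Ropp in Htr. fold D in Htr.
  replace (- (dv t - (B + 2 * C * t)) - - (C * (s - t)))
    with (- (dv t - (B + 2 * C * t)) + C * (s - t)) in Htr by ring.
  rewrite Rabs_Ropp, Rabs_mult in Htr.
  assert (Rabs C * Rabs (s - t) <= Rabs C * r) by (apply Rmult_le_compat_l; [apply Rabs_pos|auto]).
  lra.
Qed.

Definition cont_everywhere (f : R -> R) : Prop := forall t, continuous f t.

Lemma ex_RInt_cont f a b : cont_everywhere f -> ex_RInt f a b.
Proof. intros H. apply (@ex_RInt_continuous R_CompleteNormedModule). intros; apply H. Qed.

Lemma RInt_plus_cont f g a b : cont_everywhere f -> cont_everywhere g ->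
  RInt (fun t => f t + g t) a b = RInt f a b + RInt g a b.
Proof. intros. apply (RInt_plus f g); apply ex_RInt_cont; auto. Qed.
Lemma RInt_minus_cont f g a b : cont_everywhere f -> cont_everywhere g ->
  RInt (fun t => f t - g t) a b = RInt f a b - RInt g a b.
Proof. intros. apply (RInt_minus f g); apply ex_RInt_cont; auto. Qed.
Lemma RInt_scal_cont f k a b : cont_everywhere f ->
  RInt (fun t => k * f t) a b = k * RInt f a b.
Proof. intros. apply (RInt_scal f a b k); apply ex_RInt_cont; auto. Qed.

Lemma RInt_Chasles_cont f a b c : cont_everywhere f ->
  RInt f a b + RInt f b c = RInt f a c.
Proof. intros. apply (RInt_Chasles f); apply ex_RInt_cont; auto. Qed.

Lemma RInt_point_R (f : R -> R) a : RInt f a a = 0.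
Proof. apply (RInt_point a f). Qed.

Lemma RInt_ext_all (f g : R -> R) a b : (forall x, f x = g x) -> RInt f a b = RInt g a b.
Proof. intros H. apply RInt_ext. intros; apply H. Qed.

Lemma RInt_ext_open (f g : R -> R) a b : a <= b ->
  (forall x, a < x < b -> f x = g x) -> RInt f a b = RInt g a b.
Proof.
  intros Hab H. apply RInt_ext. intros x Hx.
  rewrite Rmin_left in Hx by lra. rewrite Rmax_right in Hx by lra. auto.
Qed.

Lemma derive_cont_everywhere (f df : R -> R) :
  (forall x, is_derive f x (df x)) -> cont_everywhere f.
Proof. intros H t. apply (@ex_derive_continuous R_AbsRing R_NormedModule). eexists; apply H. Qed.

Lemma derive_RInt f a : cont_everywhere f -> forall t, is_derive (fun x => RInt f a x) t (f t).
Proof.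
  intros H t. apply is_derive_RInt with a.
  - exists (mkposreal 1 Rlt_0_1). intros y _. apply RInt_correct. apply ex_RInt_cont; auto.
  - apply H.
Qed.

Lemma RInt_antiderivative (F f : R -> R) a b :
  (forall x, is_derive F x (f x)) -> cont_everywhere f -> RInt f a b = F b - F a.
Proof.
  intros H1 H2. apply is_RInt_unique. apply (is_RInt_derive F f); intros; auto.
Qed.

Lemma RInt_sq_nonneg f a b : a <= b -> cont_everywhere f -> 0 <= RInt (fun t => f t * f t) a b.
Proof.
  intros Hab H. apply RInt_ge_0; auto.
  - apply ex_RInt_cont. intro; cont.
  - intros. nra.
Qed.

(* Cauchy-Schwarz: the quadratic k |-> ||f - k g||^2 is nonnegative. *)
Lemma RInt_Cauchy_Schwarz f g a b : a <= b -> cont_everywhere f -> cont_everywhere g ->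
  (RInt (fun t => f t * g t) a b) ^ 2
  <= RInt (fun t => f t * f t) a b * RInt (fun t => g t * g t) a b.
Proof.
  intros Hab Hf Hg.
  set (A := RInt (fun t => f t * f t) a b : R).
  set (B := RInt (fun t => f t * g t) a b : R).
  set (C := RInt (fun t => g t * g t) a b : R).
  assert (Hq : forall k, 0 <= A - 2 * k * B + k * k * C).
  { intros k.
    assert (E : RInt (fun t => (f t - k * g t) * (f t - k * g t)) a b = A - 2 * k * B + k * k * C).
    { rewrite (RInt_ext_all _ (fun t => (f t * f t - (2 * k) * (f t * g t)) + (k * k) * (g t * g t)))
        by (intros; ring).
      rewrite RInt_plus_cont, RInt_minus_cont, !RInt_scal_cont; [reflexivity|..];
        intro; cont. }
    rewrite <- E. apply RInt_sq_nonneg; auto. intro; cont. }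
  assert (HA : 0 <= A) by (apply RInt_sq_nonneg; auto).
  assert (HC : 0 <= C) by (apply RInt_sq_nonneg; auto).
  destruct (Req_dec C 0) as [HC0|HC0].
  - destruct (Req_dec B 0) as [HB0|HB0].
    + rewrite HB0, HC0. lra.
    + specialize (Hq ((A + 1) / (2 * B))). rewrite HC0 in Hq.
      replace (A - 2 * ((A + 1) / (2 * B)) * B + (A + 1) / (2 * B) * ((A + 1) / (2 * B)) * 0)
        with (-1) in Hq by (field; auto).
      lra.
  - specialize (Hq (B / C)).
    replace (A - 2 * (B / C) * B + B / C * (B / C) * C) with (A - B * B / C) in Hq
      by (field; auto).
    assert (HBC : B * B / C * C <= A * C) by (apply Rmult_le_compat_r; lra).
    replace (B * B / C * C) with (B * B) in HBC by (field; auto). simpl. lra.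
Qed.

Lemma RInt_partition (f : R -> R) (eta : nat -> R) : cont_everywhere f -> forall n,
  RInt f (eta 0%nat) (eta (S n)) = sum_f_R0 (fun i => RInt f (eta i) (eta (S i))) n.
Proof.
  intros Hf n. induction n; simpl; [reflexivity|].
  rewrite <- IHn. symmetry. apply RInt_Chasles_cont; auto.
Qed.

Lemma sum_f_R0_le_scal (X Y : nat -> R) K n : (forall i, (i <= n)%nat -> X i <= K * Y i) ->
  sum_f_R0 X n <= K * sum_f_R0 Y n.
Proof.
  induction n; intros H; simpl; [apply H; lia|].
  rewrite Rmult_plus_distr_l. apply Rplus_le_compat; [apply IHn; intros|]; apply H; lia.
Qed.

Lemma mesh_ge l eta i : (i <= l)%nat -> eta (S i) - eta i <= mesh l eta.
Proof.
  intros Hi. unfold mesh.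
  assert (Hin : In (eta (S i) - eta i) (map (fun i => eta (S i) - eta i) (seq 0 (S l)))).
  { apply in_map_iff. exists i. split; auto. apply in_seq. lia. }
  induction (map _ _) as [|x L IH]; simpl in *; [contradiction|].
  destruct Hin as [->|Hin]; [apply Rmax_l|]. eapply Rle_trans; [apply IH, Hin|apply Rmax_r].
Qed.

Lemma mesh_le_T T l eta : is_partition T l eta -> mesh l eta <= T.
Proof.
  intros [H0 [HT Hs]]. unfold mesh.
  assert (Hle : forall x, In x (map (fun i => eta (S i) - eta i) (seq 0 (S l))) -> x <= T).
  { intros x Hx. apply in_map_iff in Hx. destruct Hx as [i [<- Hi]]. apply in_seq in Hi.
    assert (eta 0%nat <= eta i) by (apply (eta_mono l eta Hs); lia).
    assert (eta (S i) <= eta (S l)) by (apply (eta_mono l eta Hs); lia). lra. }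
  assert (HT0 : 0 <= T) by (rewrite <- HT, <- H0; apply (eta_mono l eta Hs); lia).
  induction (map _ _) as [|x L IH]; simpl in *; auto.
  apply Rmax_lub; auto.
Qed.

Lemma cross_term_bound m A B : 0 <= A -> 0 <= B -> m * m <= A * B -> 2 * m <= A + B.
Proof.
  intros HA HB H. destruct (Rle_dec (2 * m) (A + B)) as [|Hn]; auto.
  assert ((A + B) * (A + B) < (2 * m) * (2 * m)) by (apply Rmult_le_0_lt_compat; lra).
  pose proof (pow2_ge_0 (A - B)). nra.
Qed.

Lemma combined_square_bound al be X Y Sx Sy P1 P2 :
  0 <= Sx -> 0 <= Sy -> 0 <= P1 -> 0 <= P2 ->
  X ^ 2 <= Sx * P1 -> Y ^ 2 <= Sy * P2 ->
  (al * X + be * Y) ^ 2 <= (al ^ 2 * Sx + be ^ 2 * Sy) * (P1 + P2).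
Proof.
  intros H1 H2 H3 H4 H5 H6.
  pose proof (pow2_ge_0 al). pose proof (pow2_ge_0 be).
  assert (Hcross : 2 * (al * X * (be * Y)) <= al ^ 2 * Sx * P2 + be ^ 2 * Sy * P1).
  { apply cross_term_bound.
    - apply Rmult_le_pos; [apply Rmult_le_pos|]; auto.
    - apply Rmult_le_pos; [apply Rmult_le_pos|]; auto.
    - replace (al * X * (be * Y) * (al * X * (be * Y))) with ((al^2 * be^2) * (X^2 * Y^2)) by ring.
      replace (al ^ 2 * Sx * P2 * (be ^ 2 * Sy * P1)) with ((al^2 * be^2) * ((Sx * P1) * (Sy * P2)))
        by ring.
      apply Rmult_le_compat_l; [apply Rmult_le_pos; auto|].
      apply Rmult_le_compat; auto; apply pow2_ge_0. }
  assert (al ^ 2 * X ^ 2 <= al ^ 2 * (Sx * P1)) by (apply Rmult_le_compat_l; auto).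
  assert (be ^ 2 * Y ^ 2 <= be ^ 2 * (Sy * P2)) by (apply Rmult_le_compat_l; auto).
  nra.
Qed.

Lemma RInt_sq_dist c d : RInt (fun s => (s - c) * (s - c)) c d = (d - c) ^ 3 / 3.
Proof.
  rewrite (RInt_antiderivative (fun s => (s - c) * (s - c) * (s - c) / 3)); [Req; field|..].
  - intros x. eapply derive_eq; [unfold Rdiv; apply derive_mult; der; apply derive_const|].
    simpl. Req; field.
  - intro; cont.
Qed.

Lemma RInt_sq_dist_right c d : RInt (fun s => (d - s) * (d - s)) c d = (d - c) ^ 3 / 3.
Proof.
  rewrite (RInt_ext_all _ (fun s => (s - d) * (s - d))) by (intros; ring).
  rewrite <- (opp_RInt_swap _ d c), RInt_sq_dist; [Req; unfold opp; simpl; field|].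
  apply ex_RInt_cont; intro; cont.
Qed.

Section ElementError.
Variables p u1 U : R -> R.
Hypothesis Hu1 : forall x, is_derive u1 x (p x).
Hypothesis HU : forall x, is_derive U x (u1 x).
Hypothesis Hp : cont_everywhere p.
Variables a b : R.
Hypothesis Hab : a < b.

Let Cu1 : cont_everywhere u1 := derive_cont_everywhere u1 p Hu1.
Let CU : cont_everywhere U := derive_cont_everywhere U u1 HU.

Definition chord_error (t : R) := U t - (U a + (U b - U a) / (b - a) * (t - a)).

Lemma chord_error_pointwise t : a <= t <= b ->
  chord_error t ^ 2 <= (t - a) ^ 2 * (b - t) ^ 2 / (3 * (b - a)) * RInt (fun s => p s * p s) a b.
Proof.
  intros Ht.
  set (X := RInt (fun s => (s - a) * p s) a t).
  set (Y := RInt (fun s => (b - s) * p s) t b).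
  (* Peano kernel representation: integrating by parts twice *)
  assert (HX : X = ((t - a) * u1 t - U t) - ((a - a) * u1 a - U a)).
  { unfold X. apply (RInt_antiderivative (fun s => (s - a) * u1 s - U s)).
    - intros x. eapply derive_eq; [der|]. simpl. Req; ring.
    - intro; cont. }
  assert (HY : Y = ((b - b) * u1 b + U b) - ((b - t) * u1 t + U t)).
  { unfold Y. apply (RInt_antiderivative (fun s => (b - s) * u1 s + U s)).
    - intros x. eapply derive_eq; [der|]. simpl. Req; ring.
    - intro; cont. }
  assert (Hid : chord_error t = - ((b - t) / (b - a) * X + (t - a) / (b - a) * Y)).
  { rewrite HX, HY. unfold chord_error. Req; field. lra. }
  assert (CX : X ^ 2 <= (t - a) ^ 3 / 3 * RInt (fun s => p s * p s) a t).
  { rewrite <- RInt_sq_dist. apply (RInt_Cauchy_Schwarz (fun s => s - a) p); try lra; auto.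
    intro; cont. }
  assert (CY : Y ^ 2 <= (b - t) ^ 3 / 3 * RInt (fun s => p s * p s) t b).
  { rewrite <- RInt_sq_dist_right. apply (RInt_Cauchy_Schwarz (fun s => b - s) p); try lra; auto.
    intro; cont. }
  assert (Hch : RInt (fun s => p s * p s) a t + RInt (fun s => p s * p s) t b
                = RInt (fun s => p s * p s) a b).
  { apply RInt_Chasles_cont. intro; cont. }
  assert (P1 : 0 <= RInt (fun s => p s * p s) a t) by (apply RInt_sq_nonneg; auto; lra).
  assert (P2 : 0 <= RInt (fun s => p s * p s) t b) by (apply RInt_sq_nonneg; auto; lra).
  pose proof (combined_square_bound ((b - t) / (b - a)) ((t - a) / (b - a)) X Y
     ((t - a) ^ 3 / 3) ((b - t) ^ 3 / 3) _ _
     ltac:(apply Rdiv_le_0_compat; [apply pow_le; lra|lra])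
     ltac:(apply Rdiv_le_0_compat; [apply pow_le; lra|lra]) P1 P2 CX CY) as HL.
  rewrite Hch in HL.
  rewrite Hid. replace ((- ((b - t) / (b - a) * X + (t - a) / (b - a) * Y)) ^ 2)
    with (((b - t) / (b - a) * X + (t - a) / (b - a) * Y) ^ 2) by ring.
  eapply Rle_trans; [apply HL|]. right. Req; field. lra.
Qed.

(* Integrating the pointwise bound, using
   int_a^b (t - a)^2 (b - t)^2 dt = (b - a)^5/30. *)
Lemma chord_error_L2 :
  RInt (fun t => chord_error t * chord_error t) a b
  <= (b - a) ^ 4 / 90 * RInt (fun s => p s * p s) a b.
Proof.
  set (P := RInt (fun s => p s * p s) a b).
  assert (Ce : cont_everywhere chord_error) by (intro; unfold chord_error; cont).
  eapply Rle_trans.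
  - apply (RInt_le _ (fun t => (t - a) * (t - a) * ((b - t) * (b - t)) * (/ (3 * (b - a)) * P)));
      [lra|apply ex_RInt_cont; intro; cont..|].
    intros x Hx. pose proof (chord_error_pointwise x ltac:(lra)) as H. fold P in H.
    replace (chord_error x * chord_error x) with (chord_error x ^ 2) by ring.
    eapply Rle_trans; [apply H|]. right. field. lra.
  - right.
    rewrite (RInt_antiderivative (fun t => / (3 * (b - a)) * P *
      ((b - a) ^ 2 * (t - a) ^ 3 / 3 - (b - a) * (t - a) ^ 4 / 2 + (t - a) ^ 5 / 5))).
    + Req; field. lra.
    + intros x. auto_derive; auto. Req; field. lra.
    + intro. cont.
Qed.

End ElementError.

(* A crude upper bound for pi, from the alternating series bound for sin. *)
Lemma PI_lt_32_10 : PI < 32/10.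
Proof.
  destruct (Rlt_or_le PI (32/10)) as [H|H]; auto. exfalso.
  pose proof (SIN (32/10) ltac:(lra) H) as [_ H2].
  pose proof (sin_ge_0 (32/10) ltac:(lra) H).
  unfold sin_ub, sin_approx in H2. cbn [sum_f_R0] in H2. unfold sin_term in H2.
  cbn [Nat.mul Nat.add] in H2.
  rewrite !fact_simpl in H2. cbn [Factorial.fact] in H2. rewrite !mult_INR in H2.
  cbn [INR] in H2. simpl pow in H2.
  lra.
Qed.

(* For s = sqrt mu T <= 3/2 the interpolation term is bounded through
   mu h^2 <= mu T^2 = s^2. *)
Lemma margin_small_s s : 0 <= s <= 3/2 -> 4/(2+s)^4 + s^4/90 <= 1/(1+s)^2.
Proof.
  intros Hs.
  assert (HD : 0 < (2+s)^4) by (apply pow_lt; lra).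
  assert (HE : 0 < (1+s)^2) by (apply pow_lt; lra).
  assert (Hs4 : 0 <= s^4) by (apply pow_le; lra).
  assert (Hpoly : 360 * (1+s)^2 + 938 * s^4 <= 90 * (2+s)^4).
  { assert (s^2 <= 9/4) by nra. assert (0 <= s^3) by (simpl; nra).
    assert (s^4 <= 9/4 * s^2) by (replace (s^4) with (s^2*s^2) by ring; nra).
    nra. }
  assert (HDE : (2+s)^4 * (1+s)^2 <= 938).
  { assert (HA : (1+s)^2 <= 25/4) by nra.
    assert (HB : (2+s)^4 <= 2401/16).
    { replace ((2+s)^4) with (((2+s)^2)^2) by ring. replace (2401/16) with ((49/4)^2) by field.
      apply pow_incr. split; nra. }
    apply Rle_trans with (2401/16 * (25/4)); [apply Rmult_le_compat|]; lra. }
  assert (s^4 * ((2+s)^4 * (1+s)^2) <= s^4 * 938) by (apply Rmult_le_compat_l; lra).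
  replace (4/(2+s)^4 + s^4/90)
    with ((360 * (1+s)^2 + s^4 * ((2+s)^4 * (1+s)^2)) / (90 * (2+s)^4 * (1+s)^2)) by (field; lra).
  replace (1/(1+s)^2) with ((90 * (2+s)^4) / (90 * (2+s)^4 * (1+s)^2)) by (field; lra).
  unfold Rdiv. apply Rmult_le_compat_r; [left; apply Rinv_0_lt_compat; nra|lra].
Qed.

(* For s >= 3/2 the mesh condition will bound (mu h^2)^2 by
   pi^8/(4 (2+s)^4 s^4); the margin then follows from pi^8 <= 11000. *)
Lemma margin_large_s s : 3/2 <= s ->
  4/(2+s)^4 + PI^8/(4*(2+s)^4*s^4)/90 <= 1/(1+s)^2.
Proof.
  intros Hs.
  assert (HD : 0 < (2+s)^4) by (apply pow_lt; lra).
  assert (HE : 0 < (1+s)^2) by (apply pow_lt; lra).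
  assert (Hs4 : 81/16 <= s^4).
  { replace (s^4) with ((s^2)^2) by ring. replace (81/16) with ((9/4)^2) by field.
    apply pow_incr. split; nra. }
  assert (HP8 : PI^8 <= 11000).
  { pose proof PI_lt_32_10. pose proof PI_RGT_0.
    apply Rle_trans with ((32/10)^8); [apply pow_incr|]; lra. }
  assert (H1 : (1+s)^2 * (s+3)^2 <= (2+s)^4).
  { replace ((2+s)^4) with (((2+s)^2)^2) by ring.
    replace ((1+s)^2 * (s+3)^2) with (((1+s)*(s+3))^2) by ring.
    apply pow_incr. split; nra. }
  assert (H2 : 11000 <= 360 * s^4 * ((s+3)^2 - 4)).
  { assert (65/4 <= (s+3)^2 - 4) by nra.
    apply Rle_trans with (360 * (81/16) * (65/4)); [lra|].
    apply Rmult_le_compat; lra. }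
  assert (H3 : 360 * s^4 * ((1+s)^2 * (s+3)^2) <= 360 * s^4 * (2+s)^4)
    by (apply Rmult_le_compat_l; [lra|auto]).
  assert (H4 : (1440 * s^4 + PI^8) * (1+s)^2 <= (360 * s^4 * (s+3)^2) * (1+s)^2)
    by (apply Rmult_le_compat_r; lra).
  replace (4/(2+s)^4 + PI^8/(4*(2+s)^4*s^4)/90)
    with ((1440 * s^4 * (1+s)^2 + PI^8 * (1+s)^2) / (360 * s^4 * (2+s)^4 * (1+s)^2))
    by (field; split; lra).
  replace (1/(1+s)^2) with ((360 * s^4 * (2+s)^4) / (360 * s^4 * (2+s)^4 * (1+s)^2))
    by (field; split; lra).
  unfold Rdiv. apply Rmult_le_compat_r; [|nra].
  left; apply Rinv_0_lt_compat. apply Rmult_lt_0_compat; [|auto]. apply Rmult_lt_0_compat; lra.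
Qed.

(* The numerical heart of the theorem: with s = sqrt mu T and y = mu h^2,
   the mesh condition (in the form y s^2 <= pi^4 / (2 (2+s)^2)) leaves room
   for the interpolation error: 4/(2+s)^4 <= 1/(1+s)^2 - y^2/90. *)
Lemma margin_inequality (s y : R) : 0 <= s -> 0 <= y -> y <= s^2 ->
  y * s^2 <= PI^4/(2*(2+s)^2) -> 4/(2+s)^4 <= 1/(1+s)^2 - y^2/90.
Proof.
  intros Hs Hy H1 H2.
  destruct (Rle_dec s (3/2)) as [Hc|Hc].
  - assert (y^2 <= s^4) by (replace (s^4) with ((s^2)^2) by ring; apply pow_incr; lra).
    pose proof (margin_small_s s ltac:(lra)). lra.
  - assert (Hs2 : 0 < s^2) by (apply pow_lt; lra).
    assert (HD : 0 < (2+s)^2) by (apply pow_lt; lra).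
    assert (Hy1 : y <= PI^4/(2*(2+s)^2) / s^2).
    { apply Rmult_le_reg_r with (s^2); auto.
      replace (PI^4/(2*(2+s)^2) / s^2 * s^2) with (PI^4/(2*(2+s)^2)) by (field; lra). lra. }
    assert (y^2 <= PI^8/(4*(2+s)^4*s^4)).
    { eapply Rle_trans; [apply pow_incr; split; [auto|apply Hy1]|]. right. field. split; lra. }
    pose proof (margin_large_s s ltac:(lra)). lra.
Qed.

Definition infsup_const (T mu : R) : R :=
  2 * PI ^ 2 / ((2 + sqrt mu * T) ^ 2 * (PI ^ 2 + 4 * mu * T ^ 2)).

(* The constant is positive and at most 2/(2 + sqrt mu T)^2, since the
   factor pi^2/(pi^2 + 4 mu T^2) is at most 1. *)
Lemma infsup_const_bounds T mu : 0 < T -> 0 < mu ->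
  0 < infsup_const T mu <= 2 / (2 + sqrt mu * T) ^ 2.
Proof.
  intros HT Hmu. unfold infsup_const.
  set (s := sqrt mu * T).
  assert (Hs : 0 <= s) by (apply Rmult_le_pos; [apply sqrt_pos|lra]).
  assert (Hpi2 : 0 < PI ^ 2) by (apply pow_lt, PI_RGT_0).
  assert (Hs2 : 0 < (2 + s) ^ 2) by (apply pow_lt; lra).
  assert (HmT : 0 <= mu * T ^ 2) by (apply Rmult_le_pos; [lra|apply pow2_ge_0]).
  split.
  - apply Rdiv_lt_0_compat; [lra|apply Rmult_lt_0_compat; lra].
  - apply Rmult_le_reg_r with ((2 + s) ^ 2 * (PI ^ 2 + 4 * mu * T ^ 2)); [nra|].
    replace (2 * PI ^ 2 / ((2 + s) ^ 2 * (PI ^ 2 + 4 * mu * T ^ 2))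
               * ((2 + s) ^ 2 * (PI ^ 2 + 4 * mu * T ^ 2))) with (2 * PI ^ 2) by (field; lra).
    replace (2 / (2 + s) ^ 2 * ((2 + s) ^ 2 * (PI ^ 2 + 4 * mu * T ^ 2)))
      with (2 * (PI ^ 2 + 4 * mu * T ^ 2)) by (field; lra).
    lra.
Qed.

Lemma coercivity_margin T mu h : 0 < T -> 0 < mu -> 0 <= h <= T ->
  h <= PI ^ 2 / (sqrt 2 * (2 + sqrt mu * T) * mu * T) ->
  infsup_const T mu ^ 2 <= 1 / (1 + sqrt mu * T) ^ 2 - (mu * h ^ 2) ^ 2 / 90.
Proof.
  intros HT Hmu Hh Hmesh.
  set (s := sqrt mu * T). set (y := mu * h ^ 2).
  assert (Hs0 : 0 <= s) by (apply Rmult_le_pos; [apply sqrt_pos|lra]).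
  assert (Hsm : s ^ 2 = mu * T ^ 2).
  { unfold s. rewrite Rpow_mult_distr, pow2_sqrt by lra. auto. }
  assert (Hy0 : 0 <= y) by (apply Rmult_le_pos; [lra|apply pow2_ge_0]).
  assert (Hy1 : y <= s ^ 2).
  { rewrite Hsm. apply Rmult_le_compat_l; [lra|apply pow_incr; lra]. }
  assert (Hsq2 : 0 < sqrt 2) by (apply sqrt_lt_R0; lra).
  assert (Hy2 : y * s ^ 2 <= PI ^ 4 / (2 * (2 + s) ^ 2)).
  { assert (Hb : mu * h * T <= PI ^ 2 / (sqrt 2 * (2 + s))).
    { apply Rmult_le_compat_l with (r := mu * T) in Hmesh; [|apply Rmult_le_pos; lra].
      replace (mu * h * T) with (mu * T * h) by ring.
      eapply Rle_trans; [apply Hmesh|]. right. fold s. field. repeat split; lra. }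
    rewrite Hsm. replace (y * (mu * T ^ 2)) with ((mu * h * T) ^ 2) by (unfold y; ring).
    eapply Rle_trans; [apply pow_incr; split; [|apply Hb]; apply Rmult_le_pos; [apply Rmult_le_pos|]; lra|].
    right. unfold Rdiv. rewrite !Rpow_mult_distr, pow_inv, Rpow_mult_distr, pow2_sqrt by lra.
    replace (PI ^ 4) with ((PI ^ 2) ^ 2) by ring. field. repeat split; lra. }
  destruct (infsup_const_bounds T mu HT Hmu) as [Hc0 Hc1]. fold s in Hc1.
  eapply Rle_trans; [|apply (margin_inequality s y); auto].
  eapply Rle_trans; [apply pow_incr; split; [lra|apply Hc1]|]. right. field. lra.
Qed.

(* The last step: if a = <w, z>, E = ||z - w||^2 = ||z||^2 - 2a + ||w||^2 and
   c^2 P <= ||z||^2 - E, then c sqrt P <= a/||w||, because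
   2 a - ||w||^2 <= (a/||w||)^2. *)
Lemma quotient_lower_bound c P Z W E a : 0 <= c -> 0 < W ->
  E = Z - 2 * a + W -> 0 <= c ^ 2 * P <= Z - E -> c * sqrt P <= a / sqrt W.
Proof.
  intros Hc HW HE [HcP Hkey].
  set (r := sqrt (Z - E)). set (w := sqrt W).
  assert (Hr : r * r = Z - E) by (apply sqrt_sqrt; lra).
  assert (Hw : w * w = W) by (apply sqrt_sqrt; lra).
  assert (Hr0 : 0 <= r) by apply sqrt_pos.
  assert (Hw0 : 0 < w) by (apply sqrt_lt_R0; auto).
  assert (Hcr : c * sqrt P <= r).
  { unfold r. rewrite <- (sqrt_pow2 c), <- sqrt_mult_alt by (auto; apply pow2_ge_0).
    apply sqrt_le_1_alt. lra. }
  assert (Hra : r <= a / w).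
  { apply Rmult_le_reg_r with w; auto. replace (a / w * w) with a by (field; lra).
    pose proof (pow2_ge_0 (r - w)). nra. }
  lra.
Qed.

Lemma RInt_diff_sq_le f g a b : a <= b -> cont_everywhere f -> cont_everywhere g ->
  RInt (fun t => (f t - g t) * (f t - g t)) a b
  <= (sqrt (RInt (fun t => f t * f t) a b) + sqrt (RInt (fun t => g t * g t) a b)) ^ 2.
Proof.
  intros Hab Hf Hg.
  set (F := RInt (fun t => f t * f t) a b). set (G := RInt (fun t => g t * g t) a b).
  set (I := RInt (fun t => f t * g t) a b).
  assert (HF : 0 <= F) by (apply RInt_sq_nonneg; auto).
  assert (HG : 0 <= G) by (apply RInt_sq_nonneg; auto).
  assert (Hexp : RInt (fun t => (f t - g t) * (f t - g t)) a b = F - 2 * I + G).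
  { rewrite (RInt_ext_all _ (fun t => (f t * f t - 2 * (f t * g t)) + g t * g t)) by (intros; ring).
    rewrite RInt_plus_cont, RInt_minus_cont, RInt_scal_cont; [reflexivity|..]; intro; cont. }
  assert (HI : - I <= sqrt F * sqrt G).
  { rewrite <- sqrt_mult_alt by auto. apply Rsqr_incr_0_var; [|apply sqrt_pos].
    rewrite Rsqr_sqrt by (apply Rmult_le_pos; auto). unfold Rsqr.
    replace (- I * - I) with (I ^ 2) by ring. apply RInt_Cauchy_Schwarz; auto. }
  rewrite Hexp. replace ((sqrt F + sqrt G) ^ 2) with (sqrt F * sqrt F + 2 * (sqrt F * sqrt G)
    + sqrt G * sqrt G) by ring.
  rewrite !sqrt_sqrt by auto. lra.
Qed.

(* The construction of the test function for a fixed u in V^h_{0,*}.  The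
   hypotheses are the unpacked content of [is_partition] and [Vh0]; dv is
   the one-sided derivative provided by [C1_on]. *)
Section TestFunction.
Variables T mu : R.
Variable l : nat.
Variable eta : nat -> R.
Variables u dv : R -> R.
Hypothesis HT : 0 < T.
Hypothesis Hmu : 0 < mu.
Hypothesis Heta0 : eta 0%nat = 0.
Hypothesis HetaT : eta (S l) = T.
Hypothesis Hstep : forall i, (i <= l)%nat -> eta i < eta (S i).
Hypothesis Hquad : forall i, (i <= l)%nat -> exists A B C : R,
  forall t, eta i <= t <= eta (S i) -> u t = A + B * t + C * t ^ 2.
Hypothesis Hdv : forall t, 0 <= t <= T -> within_deriv 0 T u dv t.
Hypothesis Hu0 : u 0 = 0.

(* p: the continuous piecewise linear function equal to u' on [0, T]
   (interpolating dv at the nodes extends it continuously to all of R). *)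
Definition du := interp l eta dv.
(* u reconstructed from p; it coincides with u on [0, T]. *)
Definition u_rec t := RInt du 0 t.
Definition U_prim t := RInt u_rec 0 t.
Definition z_dual t := du t + mu * U_prim t.
Definition IU t := interp l eta U_prim t.
Definition w_test t := du t + mu * IU t.
Definition v_test t := RInt w_test 0 t.

Lemma du_cont : cont_everywhere du.
Proof. intro; apply interp_cont. Qed.
Lemma u_rec_derive : forall x, is_derive u_rec x (du x).
Proof. apply derive_RInt, du_cont. Qed.
Lemma u_rec_cont : cont_everywhere u_rec.
Proof. apply (derive_cont_everywhere _ _ u_rec_derive). Qed.
Lemma U_prim_derive : forall x, is_derive U_prim x (u_rec x).
Proof. apply derive_RInt, u_rec_cont. Qed.
Lemma U_prim_cont : cont_everywhere U_prim.
Proof. apply (derive_cont_everywhere _ _ U_prim_derive). Qed.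
Lemma IU_cont : cont_everywhere IU.
Proof. intro; apply interp_cont. Qed.
Lemma z_dual_cont : cont_everywhere z_dual.
Proof. intro. unfold z_dual. pose proof du_cont. pose proof U_prim_cont. cont. Qed.
Lemma w_test_cont : cont_everywhere w_test.
Proof. intro. unfold w_test. pose proof du_cont. pose proof IU_cont. cont. Qed.
Lemma v_test_derive : forall x, is_derive v_test x (w_test x).
Proof. apply derive_RInt, w_test_cont. Qed.
Lemma v_test_cont : cont_everywhere v_test.
Proof. apply (derive_cont_everywhere _ _ v_test_derive). Qed.

Lemma eta_in i : (i <= S l)%nat -> 0 <= eta i <= T.
Proof.
  intros Hi. rewrite <- Heta0, <- HetaT. split; apply (eta_mono l eta Hstep); lia.
Qed.

Lemma locate_node_element t : 0 <= t <= T -> exists j, (j <= l)%nat /\ eta j <= t <= eta (S j).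
Proof. intros Ht. apply (locate_element l eta l (le_n l)). lra. Qed.

Lemma dv_elem i A B C : (i <= l)%nat ->
  (forall t, eta i <= t <= eta (S i) -> u t = A + B * t + C * t ^ 2) ->
  forall t, eta i <= t <= eta (S i) -> dv t = B + 2 * C * t.
Proof.
  intros Hi Hu t Ht.
  pose proof (eta_in i ltac:(lia)). pose proof (eta_in (S i) ltac:(lia)).
  pose proof (Hstep i Hi).
  apply (within_deriv_quadratic 0 T u dv t (eta i) (eta (S i)) A B C); try lra; auto.
  apply Hdv. lra.
Qed.

Lemma du_elem i A B C : (i <= l)%nat ->
  (forall t, eta i <= t <= eta (S i) -> u t = A + B * t + C * t ^ 2) ->
  forall t, eta i <= t <= eta (S i) -> du t = B + 2 * C * t.
Proof.
  intros Hi Hu t Ht. pose proof (Hstep i Hi).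
  unfold du. rewrite (interp_elem l eta Hstep dv i t Hi Ht).
  rewrite !(dv_elem i A B C Hi Hu) by lra. field. lra.
Qed.

Lemma dv_eq_du t : 0 <= t <= T -> dv t = du t.
Proof.
  intros Ht. destruct (locate_node_element t Ht) as [j [Hj Hjt]].
  destruct (Hquad j Hj) as [A [B [C Hu]]].
  rewrite (dv_elem j A B C Hj Hu t Hjt), (du_elem j A B C Hj Hu t Hjt). reflexivity.
Qed.

Lemma u_rec_elem i : (i <= l)%nat -> forall t, eta i <= t <= eta (S i) ->
  u_rec t - u_rec (eta i) = u t - u (eta i).
Proof.
  intros Hi t Ht. destruct (Hquad i Hi) as [A [B [C Hu]]]. pose proof (Hstep i Hi).
  unfold u_rec. rewrite <- (RInt_Chasles_cont du 0 (eta i) t) by apply du_cont.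
  rewrite (RInt_ext_open du (fun s => B + 2 * C * s) (eta i) t) by
    (try lra; intros; apply (du_elem i A B C Hi Hu); lra).
  rewrite (RInt_antiderivative (fun s => B * s + C * (s * s)) (fun s => B + 2 * C * s) (eta i) t).
  - rewrite !Hu by lra. Req; ring.
  - intros x. eapply derive_eq; [der|]. simpl. ring.
  - intro; cont.
Qed.

Lemma u_rec_node : forall i, (i <= S l)%nat -> u_rec (eta i) = u (eta i).
Proof.
  induction i; intros Hi.
  - rewrite Heta0, Hu0. apply RInt_point_R.
  - pose proof (Hstep i ltac:(lia)).
    pose proof (u_rec_elem i ltac:(lia) (eta (S i)) ltac:(lra)). rewrite IHi in H0 by lia. lra.
Qed.

Lemma u_eq_u_rec t : 0 <= t <= T -> u t = u_rec t.
Proof.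
  intros Ht. destruct (locate_node_element t Ht) as [j [Hj Hjt]].
  pose proof (u_rec_elem j Hj t Hjt). rewrite u_rec_node in H by lia. lra.
Qed.

Lemma Derive_u t : 0 < t < T -> Derive u t = du t.
Proof.
  intros Ht. rewrite <- dv_eq_du by lra. apply is_derive_unique.
  apply (within_deriv_interior 0 T); auto. apply Hdv; lra.
Qed.

Lemma H1semi_u : H1semi T u = sqrt (RInt (fun t => du t * du t) 0 T).
Proof.
  unfold H1semi, L2inner. f_equal. apply RInt_ext_open; [lra|]. intros x Hx.
  rewrite Derive_u by lra. auto.
Qed.

Lemma w_test_elem i : (i <= l)%nat ->
  exists al be, forall t, eta i <= t <= eta (S i) -> w_test t = al + be * t.
Proof.
  intros Hi. destruct (Hquad i Hi) as [A [B [C Hu]]]. pose proof (Hstep i Hi).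
  set (sl := (U_prim (eta (S i)) - U_prim (eta i)) / (eta (S i) - eta i)).
  exists (B + mu * (U_prim (eta i) - sl * eta i)), (2 * C + mu * sl).
  intros t Ht. unfold w_test. rewrite (du_elem i A B C Hi Hu t Ht).
  unfold IU. rewrite (interp_elem l eta Hstep U_prim i t Hi Ht). fold sl. ring.
Qed.

Lemma RInt_affine (f : R -> R) al be c d t : cont_everywhere f -> c <= t <= d ->
  (forall s, c <= s <= d -> f s = al + be * s) ->
  RInt f 0 t = (RInt f 0 c - al * c - be / 2 * c ^ 2) + al * t + be / 2 * t ^ 2.
Proof.
  intros Hf Ht Hs.
  rewrite <- (RInt_Chasles_cont f 0 c t) by auto.
  rewrite (RInt_ext_open f (fun s => al + be * s) c t) by (try lra; intros; apply Hs; lra).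
  rewrite (RInt_antiderivative (fun s => al * s + be / 2 * (s * s)) (fun s => al + be * s) c t).
  - Req; field.
  - intros x. eapply derive_eq; [der|]. simpl. field.
  - intro; cont.
Qed.

Lemma v_test_in_Vh0 : Vh0 T l eta v_test.
Proof.
  split; [split|].
  - apply (C1_on_of_derive 0 T v_test w_test); [apply v_test_derive|apply w_test_cont].
  - intros i Hi. destruct (w_test_elem i Hi) as [al [be Hw]].
    exists (RInt w_test 0 (eta i) - al * eta i - be / 2 * eta i ^ 2), al, (be / 2).
    intros t Ht. apply (RInt_affine w_test al be (eta i) (eta (S i)) t w_test_cont Ht Hw).
  - apply RInt_point_R.
Qed.

Lemma H1semi_v_test : H1semi T v_test = sqrt (RInt (fun t => w_test t * w_test t) 0 T).
Proof.
  unfold H1semi, L2inner. f_equal. apply RInt_ext_all. intros.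
  rewrite (is_derive_unique _ _ _ (v_test_derive x)). auto.
Qed.

Lemma HbarT_v_test_derive x : is_derive (HbarT T v_test) x (- w_test x).
Proof.
  unfold HbarT. eapply derive_eq.
  - apply (derive_minus (fun _ => v_test T) v_test); [apply derive_const|apply v_test_derive].
  - simpl. ring.
Qed.

Lemma Derive_HbarT_v_test t : Derive (HbarT T v_test) t = - w_test t.
Proof. apply is_derive_unique, HbarT_v_test_derive. Qed.

(* Integration by parts: a(u, Hbar_T v) = <w, z>, using (Hbar_T v)' = -w
   and (U (v(T) - v))' = u (v(T) - v) - U w with U(0) = 0. *)
Lemma bform_v_test : bform T mu u (HbarT T v_test) = RInt (fun t => w_test t * z_dual t) 0 T.
Proof.
  pose proof du_cont. pose proof u_rec_cont. pose proof U_prim_cont.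
  pose proof w_test_cont. pose proof v_test_cont.
  unfold bform, L2inner.
  rewrite (RInt_ext_open (fun t => Derive u t * Derive (HbarT T v_test) t)
             (fun t => (-1) * (w_test t * du t)) 0 T) by
    (try lra; intros; rewrite Derive_u, Derive_HbarT_v_test by lra; ring).
  rewrite (RInt_ext_open (fun t => u t * HbarT T v_test t)
             (fun t => u_rec t * (v_test T - v_test t)) 0 T) by
    (try lra; intros; unfold HbarT; rewrite u_eq_u_rec by lra; auto).
  assert (IBP : RInt (fun t => u_rec t * (v_test T - v_test t) - U_prim t * w_test t) 0 T = 0).
  { rewrite (RInt_antiderivative (fun t => U_prim t * HbarT T v_test t)).
    - unfold HbarT. replace (v_test T - v_test T) with 0 by ring.
      unfold U_prim at 2. rewrite RInt_point_R. Req; ring.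
    - intros x. eapply derive_eq.
      + apply derive_mult; [apply U_prim_derive|apply HbarT_v_test_derive].
      + unfold HbarT. simpl. ring.
    - intro; cont. }
  rewrite RInt_minus_cont in IBP by (intro; cont).
  apply Rminus_diag_uniq in IBP. rewrite IBP.
  rewrite (RInt_ext_all (fun t => w_test t * z_dual t)
             (fun t => w_test t * du t + mu * (U_prim t * w_test t))) by (intros; unfold z_dual; ring).
  rewrite RInt_plus_cont, !RInt_scal_cont by (intro; cont).
  Req. ring.
Qed.

Lemma v_test_nonzero : 0 < RInt (fun t => w_test t * w_test t) 0 T ->
  exists t, 0 <= t <= T /\ v_test t <> 0.
Proof.
  intros Hpos. apply NNPP. intros Hnot.
  assert (Hz : forall t, 0 <= t <= T -> v_test t = 0).
  { intros t Ht. destruct (Req_dec (v_test t) 0); auto. exfalso; apply Hnot; eauto. }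
  assert (Hw : forall x, 0 < x < T -> w_test x = 0).
  { intros x Hx.
    assert (Hpos' : 0 < Rmin x (T - x)) by (apply Rmin_glb_lt; lra).
    assert (Hloc : locally x (fun t => v_test t = 0)).
    { exists (mkposreal _ Hpos'). intros y Hy. apply Hz.
      change (Rabs (y - x) < Rmin x (T - x)) in Hy.
      pose proof (Rmin_l x (T - x)). pose proof (Rmin_r x (T - x)).
      unfold Rabs in Hy. destruct (Rcase_abs (y - x)); lra. }
    pose proof (is_derive_ext_loc v_test (fun _ => 0) x (w_test x) Hloc (v_test_derive x)) as Hd.
    apply is_derive_unique in Hd. rewrite Derive_const in Hd. auto. }
  rewrite (RInt_ext_open _ (fun _ => 0)) in Hpos by (try lra; intros; rewrite Hw by lra; ring).
  rewrite RInt_const in Hpos. unfold scal in Hpos; simpl in Hpos.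
  unfold mult in Hpos; simpl in Hpos. lra.
Qed.

Lemma sq_nonneg_0T f : cont_everywhere f -> 0 <= RInt (fun t => f t * f t) 0 T.
Proof. intros; apply RInt_sq_nonneg; auto; lra. Qed.

(* Testing z = u' + mu U against (T - t) u gives the energy identity
   <(T - t) u, z> = (||u||^2 + mu ||U||^2)/2, as
   ((T - t)(u^2 + mu U^2)/2)' = (T - t) u z - (u^2 + mu U^2)/2. *)
Lemma weighted_energy_identity :
  RInt (fun t => ((T - t) * u_rec t) * z_dual t) 0 T
  = (RInt (fun t => u_rec t * u_rec t) 0 T + mu * RInt (fun t => U_prim t * U_prim t) 0 T) / 2.
Proof.
  pose proof du_cont. pose proof u_rec_cont. pose proof U_prim_cont. pose proof z_dual_cont.
  assert (E0 : RInt (fun t => ((T - t) * u_rec t) * z_dual t - / 2 * (u_rec t * u_rec t)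
                     - (mu / 2) * (U_prim t * U_prim t)) 0 T = 0).
  { rewrite (RInt_antiderivative
               (fun t => (T - t) * (u_rec t * u_rec t + mu * (U_prim t * U_prim t)) / 2)).
    - unfold u_rec, U_prim. rewrite !RInt_point_R. Req; field.
    - intros x. pose proof (u_rec_derive x). pose proof (U_prim_derive x).
      eapply derive_eq; [unfold Rdiv; apply derive_mult; der|]. simpl. unfold z_dual. field.
    - intro; cont. }
  rewrite !RInt_minus_cont, !RInt_scal_cont in E0 by (intro; cont).
  Req. lra.
Qed.

(* Consequently mu ||U||^2 <= T^2 ||z||^2 (Cauchy-Schwarz and AM-GM). *)
Lemma U_prim_bound :
  mu * RInt (fun t => U_prim t * U_prim t) 0 T <= T ^ 2 * RInt (fun t => z_dual t * z_dual t) 0 T.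
Proof.
  pose proof u_rec_cont. pose proof U_prim_cont. pose proof z_dual_cont.
  set (A := RInt (fun t => u_rec t * u_rec t) 0 T).
  set (B := RInt (fun t => U_prim t * U_prim t) 0 T).
  set (Z := RInt (fun t => z_dual t * z_dual t) 0 T : R).
  assert (HA : 0 <= A) by (apply sq_nonneg_0T; auto).
  assert (HB : 0 <= mu * B) by (apply Rmult_le_pos; [lra|apply sq_nonneg_0T; auto]).
  assert (HZ : 0 <= Z) by (apply sq_nonneg_0T; auto).
  assert (HCS : ((A + mu * B) / 2) ^ 2 <= T ^ 2 * A * Z).
  { pose proof weighted_energy_identity as HI. fold A B in HI. rewrite <- HI.
    eapply Rle_trans; [apply (RInt_Cauchy_Schwarz (fun t => (T - t) * u_rec t) z_dual);
                       try lra; auto; intro; cont|].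
    apply Rmult_le_compat_r; auto. unfold A. rewrite <- RInt_scal_cont by (intro; cont).
    apply RInt_le; [lra|apply ex_RInt_cont; intro; cont..|].
    intros x Hx. assert (0 <= u_rec x * u_rec x) by nra.
    replace ((T - x) * u_rec x * ((T - x) * u_rec x)) with ((T - x) ^ 2 * (u_rec x * u_rec x))
      by ring.
    apply Rmult_le_compat_r; auto. apply pow_incr. lra. }
  assert (HAMGM : A * (mu * B) <= ((A + mu * B) / 2) ^ 2)
    by (pose proof (pow2_ge_0 ((A - mu * B) / 2)); nra).
  destruct (Req_dec A 0) as [HA0|HA0].
  - rewrite HA0 in HCS. assert (mu * B = 0) by nra.
    assert (0 <= T ^ 2 * Z) by (apply Rmult_le_pos; auto; apply pow2_ge_0). lra.
  - apply Rmult_le_reg_l with A; [lra|]. nra.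
Qed.

(* Stability: ||u'||^2 <= (1 + sqrt mu T)^2 ||z||^2, from u' = z - mu U. *)
Lemma stability :
  RInt (fun t => du t * du t) 0 T <= (1 + sqrt mu * T) ^ 2 * RInt (fun t => z_dual t * z_dual t) 0 T.
Proof.
  pose proof U_prim_cont. pose proof z_dual_cont.
  set (Z := RInt (fun t => z_dual t * z_dual t) 0 T : R).
  assert (HZ : 0 <= Z) by (apply sq_nonneg_0T; auto).
  assert (HmU : sqrt (RInt (fun t => (mu * U_prim t) * (mu * U_prim t)) 0 T) <= sqrt mu * T * sqrt Z).
  { apply Rle_trans with (sqrt (mu * T ^ 2 * Z)).
    2: { right. assert (0 <= T ^ 2) by apply pow2_ge_0.
         rewrite !sqrt_mult_alt, sqrt_pow2 by (try apply Rmult_le_pos; lra). ring. }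
    apply sqrt_le_1_alt.
    rewrite (RInt_ext_all _ (fun t => mu * (mu * (U_prim t * U_prim t)))) by (intros; ring).
    rewrite !RInt_scal_cont by (intro; cont).
    replace (mu * T ^ 2 * Z) with (mu * (T ^ 2 * Z)) by ring.
    apply Rmult_le_compat_l; [lra|apply U_prim_bound]. }
  rewrite (RInt_ext_all (fun t => du t * du t)
             (fun t => (z_dual t - mu * U_prim t) * (z_dual t - mu * U_prim t)))
    by (intros; unfold z_dual; ring).
  eapply Rle_trans; [apply RInt_diff_sq_le; try lra; auto; intro; cont|].
  fold Z. replace ((1 + sqrt mu * T) ^ 2 * Z) with ((sqrt Z + sqrt mu * T * sqrt Z) ^ 2)
    by (rewrite <- (sqrt_sqrt Z) at 3 by auto; ring).
  apply pow_incr. split; [apply Rplus_le_le_0_compat; apply sqrt_pos|lra].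
Qed.

Lemma U_prim_interp_error :
  RInt (fun t => (U_prim t - IU t) * (U_prim t - IU t)) 0 T
  <= mesh l eta ^ 4 / 90 * RInt (fun t => du t * du t) 0 T.
Proof.
  pose proof du_cont. pose proof U_prim_cont. pose proof IU_cont.
  rewrite <- Heta0, <- HetaT.
  rewrite (RInt_partition (fun t => (U_prim t - IU t) * (U_prim t - IU t))) by (intro; cont).
  rewrite (RInt_partition (fun t => du t * du t)) by (intro; cont).
  apply sum_f_R0_le_scal. intros i Hi. pose proof (Hstep i Hi).
  set (e := chord_error U_prim (eta i) (eta (S i))).
  rewrite (RInt_ext_open _ (fun t => e t * e t)) by
    (try lra; intros x Hx; unfold e, chord_error, IU;
     rewrite (interp_elem l eta Hstep U_prim i x Hi) by lra; auto).
  eapply Rle_trans; [apply (chord_error_L2 du u_rec U_prim u_rec_derive U_prim_derive du_cont); auto|].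
  apply Rmult_le_compat_r; [apply RInt_sq_nonneg; auto; lra|].
  unfold Rdiv. apply Rmult_le_compat_r; [lra|].
  apply pow_incr. split; [lra|apply mesh_ge; auto].
Qed.

Lemma Vh0_linear (k : R) : Vh0 T l eta (fun t => k * t).
Proof.
  split; [split|].
  - apply (C1_on_of_derive 0 T _ (fun _ => k)).
    + intros x. eapply derive_eq; [der|]. simpl. ring.
    + intro; cont.
  - intros i Hi. exists 0, k, 0. intros; ring.
  - ring.
Qed.

Lemma Derive_linear k x : Derive (fun t => k * t) x = k.
Proof. rewrite (is_derive_unique _ _ (0 * x + k * 1)); [ring|apply derive_mult_c]. Qed.

Lemma bform_linear (k : R) : bform T mu u (HbarT T (fun t => k * t)) =
  k * (RInt du 0 T + mu * RInt (fun t => u_rec t * (T - t)) 0 T).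
Proof.
  pose proof du_cont. pose proof u_rec_cont.
  unfold bform, L2inner, HbarT.
  rewrite (RInt_ext_open (fun t => Derive u t * Derive (fun s => k * T - k * s) t)
             (fun t => (- k) * du t) 0 T).
  2: lra.
  2: { intros x Hx. rewrite Derive_u by lra.
       rewrite (Derive_minus (fun _ => k * T) (fun s => k * s)), Derive_const, Derive_linear;
         [ring|apply ex_derive_const|eexists; apply derive_mult_c]. }
  rewrite (RInt_ext_open (fun t => u t * (k * T - k * t)) (fun t => k * (u_rec t * (T - t))) 0 T)
    by (try lra; intros; rewrite u_eq_u_rec by lra; ring).
  rewrite !RInt_scal_cont by (intro; cont). Req; ring.
Qed.

Lemma H1semi_linear (k : R) : H1semi T (fun t => k * t) = sqrt (k * k * T).
Proof.
  unfold H1semi, L2inner. f_equal.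
  rewrite (RInt_ext_all _ (fun _ => k * k)) by (intros; rewrite Derive_linear; ring).
  rewrite RInt_const. unfold scal; simpl. unfold mult; simpl. ring.
Qed.

(* Testing with t |-> t and t |-> -t shows that the supremum is >= 0. *)
Lemma quotients_lub_nonneg : Rbar_le (Finite 0) (Lub_Rbar (infsup_quotients T mu l eta u)).
Proof.
  set (Q := RInt du 0 T + mu * RInt (fun t => u_rec t * (T - t)) 0 T).
  set (k := if Rle_dec 0 Q then 1 else -1).
  assert (Hk : k * k = 1) by (unfold k; destruct (Rle_dec 0 Q); ring).
  apply (Rbar_le_trans _ (Finite (k * Q / sqrt (k * k * T)))).
  - simpl. rewrite Hk, Rmult_1_l. apply Rdiv_le_0_compat; [|apply sqrt_lt_R0; lra].
    unfold k; destruct (Rle_dec 0 Q); lra.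
  - apply (proj1 (Lub_Rbar_correct _)). exists (fun t => k * t). split; [apply Vh0_linear|].
    split.
    + exists T. split; [lra|]. intro H. apply Rmult_integral in H. nra.
    + rewrite bform_linear, H1semi_linear. reflexivity.
Qed.

(* The energy gap: c^2 ||u'||^2 <= ||z||^2 - ||z - w||^2, combining
   stability, the interpolation error ||z - w|| = mu ||U - I_h U|| and the
   numerical margin guaranteed by the mesh condition. *)
Lemma energy_gap :
  mesh l eta <= PI ^ 2 / (sqrt 2 * (2 + sqrt mu * T) * mu * T) ->
  infsup_const T mu ^ 2 * RInt (fun t => du t * du t) 0 T
  <= RInt (fun t => z_dual t * z_dual t) 0 T
     - RInt (fun t => (z_dual t - w_test t) * (z_dual t - w_test t)) 0 T.
Proof.
  intros Hmesh. pose proof U_prim_cont. pose proof IU_cont.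
  set (P := RInt (fun t => du t * du t) 0 T : R).
  set (Z := RInt (fun t => z_dual t * z_dual t) 0 T : R).
  set (s := sqrt mu * T). set (y := mu * mesh l eta ^ 2).
  assert (HP : 0 <= P) by (apply sq_nonneg_0T, du_cont).
  assert (Hs0 : 0 <= s) by (apply Rmult_le_pos; [apply sqrt_pos|lra]).
  assert (Hs : 0 < (1 + s) ^ 2) by (apply pow_lt; lra).
  assert (Hh : 0 <= mesh l eta <= T).
  { split; [|apply mesh_le_T; split; [auto|split; auto]].
    pose proof (mesh_ge l eta 0 ltac:(lia)). pose proof (Hstep 0 ltac:(lia)). lra. }
  assert (HE : RInt (fun t => (z_dual t - w_test t) * (z_dual t - w_test t)) 0 T <= y ^ 2 / 90 * P).
  { rewrite (RInt_ext_all _ (fun t => mu ^ 2 * ((U_prim t - IU t) * (U_prim t - IU t))))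
      by (intros; unfold z_dual, w_test; ring).
    rewrite RInt_scal_cont by (intro; cont).
    replace (y ^ 2 / 90 * P) with (mu ^ 2 * (mesh l eta ^ 4 / 90 * P)) by (unfold y; field).
    apply Rmult_le_compat_l; [apply pow2_ge_0|apply U_prim_interp_error]. }
  pose proof (coercivity_margin T mu (mesh l eta) HT Hmu Hh Hmesh) as Hm. fold s y in Hm.
  apply Rmult_le_compat_r with (r := P) in Hm; [|auto].
  replace ((1 / (1 + s) ^ 2 - y ^ 2 / 90) * P) with (P / (1 + s) ^ 2 - y ^ 2 / 90 * P) in Hm
    by (field; lra).
  assert (P / (1 + s) ^ 2 <= Z).
  { pose proof stability as Hst. fold P Z s in Hst.
    apply Rmult_le_reg_r with ((1 + s) ^ 2); auto.
    replace (P / (1 + s) ^ 2 * (1 + s) ^ 2) with P by (field; lra). lra. }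
  lra.
Qed.

Lemma infsup_bound_for_u :
  mesh l eta <= PI ^ 2 / (sqrt 2 * (2 + sqrt mu * T) * mu * T) ->
  Rbar_le (Finite (infsup_const T mu * H1semi T u)) (Lub_Rbar (infsup_quotients T mu l eta u)).
Proof.
  intros Hmesh. rewrite H1semi_u.
  pose proof z_dual_cont. pose proof w_test_cont.
  set (c := infsup_const T mu).
  set (P := RInt (fun t => du t * du t) 0 T : R).
  set (Z := RInt (fun t => z_dual t * z_dual t) 0 T : R).
  set (W := RInt (fun t => w_test t * w_test t) 0 T : R).
  set (a := RInt (fun t => w_test t * z_dual t) 0 T : R).
  set (E := RInt (fun t => (z_dual t - w_test t) * (z_dual t - w_test t)) 0 T : R).
  assert (HP : 0 <= P) by (apply sq_nonneg_0T, du_cont).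
  destruct (Req_dec P 0) as [HP0|HP0].
  { rewrite HP0, sqrt_0, Rmult_0_r. apply quotients_lub_nonneg. }
  destruct (infsup_const_bounds T mu HT Hmu) as [Hc0 _]. fold c in Hc0.
  assert (HcP : 0 < c ^ 2 * P) by (apply Rmult_lt_0_compat; [apply pow_lt|]; lra).
  pose proof (energy_gap Hmesh) as Hgap. fold c P Z E in Hgap.
  assert (HEexp : E = Z - 2 * a + W).
  { unfold E. rewrite (RInt_ext_all _ (fun t => (z_dual t * z_dual t - 2 * (w_test t * z_dual t))
                                             + w_test t * w_test t)) by (intros; ring).
    rewrite RInt_plus_cont, RInt_minus_cont, RInt_scal_cont by (intro; cont). reflexivity. }
  (* w = 0 would force ||z||^2 - E = 2a - ||w||^2 = 0 *)
  assert (HW : 0 < W).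
  { assert (Hcs : a ^ 2 <= W * Z) by (apply RInt_Cauchy_Schwarz; auto; lra).
    assert (0 <= W) by (apply sq_nonneg_0T; auto).
    destruct (Req_dec W 0) as [HW0|]; [|lra].
    rewrite HW0, Rmult_0_l in Hcs. assert (a = 0) by nra. lra. }
  eapply Rbar_le_trans; [|apply (proj1 (Lub_Rbar_correct _))].
  2: { exists v_test. split; [apply v_test_in_Vh0|]. split; [apply v_test_nonzero; auto|].
       rewrite bform_v_test, H1semi_v_test. reflexivity. }
  simpl. apply (quotient_lower_bound c P Z W E a); auto; lra.
Qed.

End TestFunction.

Theorem mainTheorem5 (T mu : R) (l : nat) (eta : nat -> R) :
  0 < T -> 0 < mu -> is_partition T l eta ->
  mesh l eta <= PI ^ 2 / (sqrt 2 * (2 + sqrt mu * T) * mu * T) ->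
  forall u : R -> R, Vh0 T l eta u ->
    Rbar_le
      (Finite (2 * PI ^ 2 / ((2 + sqrt mu * T) ^ 2 * (PI ^ 2 + 4 * mu * T ^ 2))
                 * H1semi T u))
      (Lub_Rbar (infsup_quotients T mu l eta u)).
Proof.
  intros HT Hmu [Heta0 [HetaT Hstep]] Hmesh u [[[dv [Hdv _]] Hquad] Hu0].
  exact (infsup_bound_for_u T mu l eta u dv HT Hmu Heta0 HetaT Hstep Hquad Hdv Hu0 Hmesh).
Qed.
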